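(* For every formula $A$ of $\mathbf{L_1}$ the following are equivalent: (i) $\vdash_T A$; (ii) $\vdash_H A$; (iii) $TA$ is valid in first-order predicate logic with equality; (iv) it is not the case that $\dashv_H A$.
   Context: Formulas of $\mathbf{L_1}$: built from atomic formulas $\epsilon ab$, where $a,b$ range over a countably infinite list of name variables (possibly equal), using the primitive connectives $\vee$ and $\sim$; $\wedge,\supset,\equiv$ are defined from these as usual. Disjunctions $A_1\vee\cdots\vee A_n$ may be associated in any way. Hilbert-type $\mathbf{L_1}$: $\vdash_H A$ means $A$ belongs to the smallest set of formulas of $\mathbf{L_1}$ containing all instances of classical propositional tautologies and all formulas $\epsilon ab\supset\epsilon aa$, $(\epsilon ab\wedge\epsilon bc)\supset\epsilon ac$, $(\epsilon ab\wedge\epsilon bb)\supset\epsilon ba$ (for arbitrary name variables $a,b,c$), and closed under modus ponens. Positive/negative parts (occurrences of subformulas): $A$ is a positive part of $A$; if $B\vee C$ is a positive part of $A$ then $B$ and $C$ are positive parts of $A$; if $\sim B$ is a positive part of $A$ then $B$ is a negative part of $A$; if $\sim B$ is a negative part of $A$ then $B$ is a positive part of $A$. $F[B_+]$ (resp. $G[B_-]$) denotes a formula with a specified occurrence of $B$ as a positive (resp. negative) part; $F[B_+,C_-]$, $G[B_-,C_-]$ etc. denote formulas with specified non-overlapping such occurrences. Tableaux: the reduction rules are ($\vee_-$) from $G[B\vee C_-]$ produce two branches $G[B\vee C_-]\vee\sim B$ and $G[B\vee C_-]\vee\sim C$; ($\epsilon_1$) from $G[\epsilon ab_-]$ produce $G[\epsilon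 ab_-]\vee\sim\epsilon aa$; ($\epsilon_2$) from $G[\epsilon ab_-,\epsilon bc_-]$ produce $G[\epsilon ab_-,\epsilon bc_-]\vee\sim\epsilon ac$; ($\epsilon_{3b}$) from $G[\epsilon ab_-,\epsilon bb_-]$ produce $G[\epsilon ab_-,\epsilon bb_-]\vee\sim\epsilon ba$. A tableau for $A$ is a finite tree of formulas with root $A$ in which the children of each non-leaf node are obtained from it by one reduction rule. A branch is closed if its last formula has the form $F[B_+,B_-]$ (some formula $B$ has one occurrence as a positive part and another as a negative part); a tableau is closed if all its branches are closed. $\vdash_T A$ means that $A$ has a closed tableau. Hintikka formula: a formula $H$ such that (1) $H$ is not of the form $F[B_+,B_-]$; (2) if $B\vee C$ is a negative part of $H$ then $B$ or $C$ is a negative part of $H$; (3) if $\epsilon ab$ is a negative part of $H$ then so is $\epsilon aa$; (4) if $\epsilon ab$ and $\epsilon bc$ are negative parts of $H$ then so is $\epsilon ac$; (5) if $\epsilon ab$ and $\epsilon bb$ are negative parts of $H$ then so is $\epsilon ba$. Hilbert-type axiomatic rejection $\mathbf{HAR}$: fix a name variable $a_0$. $\dashv_H$ is the smallest set of formulas such that: $\dashv_H\epsilon a_0a_0$; $\dashv_H\sim\epsilon a_0a_0$; if $\vdash_H A\supset B$ and $\dashv_H B$ then $\dashv_H A$; if $\dashv_H A$ and $A$ is obtained from $B$ by a uniform substitution of name variables for name variables, then $\dashv_H B$; if $A$ is a Hintikka formula which is a disjunction all of whose disjuncts are atomic or negated atomic formulas, $\dashv_H A$, and $\epsilon ab$ does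 not occur in $A$ as a negative part, then $\dashv_H A\vee\epsilon ab$. Translation $T$ into first-order logic with equality, with a monadic predicate $F_a$ for each name variable $a$: $T\epsilon ab=\exists x(F_ax\wedge F_bx)\wedge\forall x\forall y(F_ax\wedge F_ay\supset x=y)$; $T(A\vee B)=TA\vee TB$; $T(\sim A)=\sim TA$. ''Valid in first-order predicate logic with equality'' means true in every first-order structure (nonempty domain, $=$ interpreted as identity, arbitrary interpretation of the $F_a$). *)

From Stdlib Require Import List.
Import ListNotations.

Definition name := nat.

Inductive form : Type :=
| Eps : name -> name -> form
| Or  : form -> form -> form
| Not : form -> form.

Definition Imp (A B : form) : form := Or (Not A) B.
Definition And (A B : form) : form := Not (Or (Not A) (Not B)).
Definition Iff (A B : form) : form := And (Imp A B) (Imp B A).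

(* occ_in A s p B t : starting at the root A with polarity s (true = positive),
   following the path p one reaches an occurrence of B with polarity t.
   Path components: 0 = left disjunct / argument of ~, 1 = right disjunct.
   Following the definition, one descends into B \/ C only when it is positive. *)
Inductive occ_in : form -> bool -> list nat -> form -> bool -> Prop :=
| occ_here : forall A s, occ_in A s [] A s
| occ_orl : forall B C q D t,
    occ_in B true q D t -> occ_in (Or B C) true (0 :: q) D t
| occ_orr : forall B C q D t,
    occ_in C true q D t -> occ_in (Or B C) true (1 :: q) D t
| occ_not : forall B s q D t,
    occ_in B (negb s) q D t -> occ_in (Not B) s (0 :: q) D t.

Definition pos_occ (A : form) (p : list nat) (B : form) : Prop := occ_in A true p B true.
Definition neg_occ (A : form) (p : list nat) (B : form) : Prop := occ_in A true p B false.

Definition pos_part (A B : form) : Prop := exists p, pos_occ A p B.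
Definition neg_part (A B : form) : Prop := exists p, neg_occ A p B.

Definition prefix (p q : list nat) : Prop := exists r, q = p ++ r.
Definition nonoverlap (p q : list nat) : Prop := ~ prefix p q /\ ~ prefix q p.

(* A has the form F[B+, B-] for some formula B *)
Definition closed_form (A : form) : Prop :=
  exists B p q, pos_occ A p B /\ neg_occ A q B /\ nonoverlap p q.

Inductive has_closed_tableau : form -> Prop :=
| tab_leaf : forall G, closed_form G -> has_closed_tableau G
| tab_or : forall G p B C,
    neg_occ G p (Or B C) ->
    has_closed_tableau (Or G (Not B)) ->
    has_closed_tableau (Or G (Not C)) ->
    has_closed_tableau G
| tab_eps1 : forall G p a b,
    neg_occ G p (Eps a b) ->
    has_closed_tableau (Or G (Not (Eps a a))) ->
    has_closed_tableau G
| tab_eps2 : forall G p q a b c,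
    neg_occ G p (Eps a b) -> neg_occ G q (Eps b c) -> nonoverlap p q ->
    has_closed_tableau (Or G (Not (Eps a c))) ->
    has_closed_tableau G
| tab_eps3b : forall G p q a b,
    neg_occ G p (Eps a b) -> neg_occ G q (Eps b b) -> nonoverlap p q ->
    has_closed_tableau (Or G (Not (Eps b a))) ->
    has_closed_tableau G.

Definition T_provable (A : form) : Prop := has_closed_tableau A.

Inductive pform : Type :=
| PVar : nat -> pform
| POr  : pform -> pform -> pform
| PNot : pform -> pform.

Fixpoint peval (v : nat -> bool) (P : pform) : bool :=
  match P with
  | PVar n => v n
  | POr P Q => orb (peval v P) (peval v Q)
  | PNot P => negb (peval v P)
  end.

Definition ptautology (P : pform) : Prop := forall v, peval v P = true.

Fixpoint pinst (s : nat -> form) (P : pform) : form :=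
  match P with
  | PVar n => s n
  | POr P Q => Or (pinst s P) (pinst s Q)
  | PNot P => Not (pinst s P)
  end.

Definition taut_instance (A : form) : Prop :=
  exists P s, ptautology P /\ A = pinst s P.

Inductive H_provable : form -> Prop :=
| H_taut : forall A, taut_instance A -> H_provable A
| H_ax1 : forall a b, H_provable (Imp (Eps a b) (Eps a a))
| H_ax2 : forall a b c, H_provable (Imp (And (Eps a b) (Eps b c)) (Eps a c))
| H_ax3 : forall a b, H_provable (Imp (And (Eps a b) (Eps b b)) (Eps b a))
| H_mp : forall A B, H_provable (Imp A B) -> H_provable A -> H_provable B.

(* Truth of the translated sentence TA in the structure with domain D and
   interpretation F a of the monadic predicate F_a (equality = identity). *)
Fixpoint Tsat (D : Type) (F : name -> D -> Prop) (A : form) : Prop :=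
  match A with
  | Eps a b => (exists x, F a x /\ F b x) /\
               (forall x y, F a x /\ F a y -> x = y)
  | Or A B => Tsat D F A \/ Tsat D F B
  | Not A => ~ Tsat D F A
  end.

(* TA is valid: true in every structure (nonempty domain) *)
Definition T_valid (A : form) : Prop :=
  forall (D : Type) (d : D) (F : name -> D -> Prop), Tsat D F A.

Definition hintikka (H : form) : Prop :=
  ~ closed_form H /\
  (forall B C, neg_part H (Or B C) -> neg_part H B \/ neg_part H C) /\
  (forall a b, neg_part H (Eps a b) -> neg_part H (Eps a a)) /\
  (forall a b c, neg_part H (Eps a b) -> neg_part H (Eps b c) -> neg_part H (Eps a c)) /\
  (forall a b, neg_part H (Eps a b) -> neg_part H (Eps b b) -> neg_part H (Eps b a)).

Inductive literal_disj : form -> Prop :=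
| ld_atom : forall a b, literal_disj (Eps a b)
| ld_natom : forall a b, literal_disj (Not (Eps a b))
| ld_or : forall A B, literal_disj A -> literal_disj B -> literal_disj (Or A B).

Fixpoint nsubst (s : name -> name) (A : form) : form :=
  match A with
  | Eps a b => Eps (s a) (s b)
  | Or A B => Or (nsubst s A) (nsubst s B)
  | Not A => Not (nsubst s A)
  end.

Inductive H_rejected (a0 : name) : form -> Prop :=
| R_ax1 : H_rejected a0 (Eps a0 a0)
| R_ax2 : H_rejected a0 (Not (Eps a0 a0))
| R_mp : forall A B, H_provable (Imp A B) -> H_rejected a0 B -> H_rejected a0 A
| R_subst : forall A B s, H_rejected a0 A -> A = nsubst s B -> H_rejected a0 B
| R_hint : forall A a b,
    hintikka A -> literal_disj A -> H_rejected a0 A ->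
    ~ neg_part A (Eps a b) -> H_rejected a0 (Or A (Eps a b)).

(* Validity is the hub.  Soundness is semantic: tableau rules and Hilbert axioms
   preserve validity, and every rejected formula has a countermodel (a Hintikka
   formula is falsified by a canonical structure).  Completeness rests on one
   construction: any relation N on names obeying the three epsilon axioms
   (eps ab -> eps aa, transitivity, eps ab /\ eps bb -> eps ba) is the
   interpretation of epsilon in some structure ([relation_model]).  From it:
   - Hilbert: a valid A follows propositionally from the finitely many axiom
     instances over its names, since every assignment to the atoms respecting
     them is realised by a structure;
   - tableaux: a systematic tableau, bounded by a finite universe of formulas,
     either closes or reaches a Hintikka formula, which is never valid;
   - rejection: a countermodel of A gives a literal disjunction L recording its
     epsilon-facts on the names of A; L is rejected (a collapsed seed followed by
     Hintikka steps) and A -> L is a tautology, so A is rejected. *)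

From Stdlib Require Import List Bool Arith Lia Classical ClassicalEpsilon
  FunctionalExtensionality PropExtensionality Cantor.
Import ListNotations.

(** * Occurrences of subformulas *)

Lemma occ_app A s p X t q Y u :
  occ_in A s p X t -> occ_in X t q Y u -> occ_in A s (p ++ q) Y u.
Proof. induction 1; intros; simpl; try constructor; auto. Qed.

Lemma occ_split p q A s Y u :
  occ_in A s (p ++ q) Y u -> exists X t, occ_in A s p X t /\ occ_in X t q Y u.
Proof.
  revert A s. induction p as [|i p IHp]; intros A s H; simpl in *.
  - exists A, s; split; [constructor | auto].
  - inversion H; subst;
      match goal with Hx : occ_in _ _ (p ++ q) _ _ |- _ =>
        destruct (IHp _ _ Hx) as (X & t & H1 & H2) end;
      exists X, t; split; auto; constructor; auto.
Qed.

Lemma occ_det A s p X t Y u : occ_in A s p X t -> occ_in A s p Y u -> X = Y /\ t = u.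
Proof. intros H; revert Y u; induction H; intros Y u H'; inversion H'; subst; auto. Qed.

Lemma occ_atom_inv a b t r Y u :
  occ_in (Eps a b) t r Y u -> r = [] /\ Y = Eps a b /\ u = t.
Proof. inversion 1; subst; auto. Qed.

Lemma occ_below_atom G p r a b t Y u :
  occ_in G true p (Eps a b) t -> occ_in G true (p ++ r) Y u -> Y = Eps a b /\ u = t.
Proof.
  intros H1 H2. destruct (occ_split _ _ _ _ _ _ H2) as (X & t' & H3 & H4).
  destruct (occ_det _ _ _ _ _ _ _ H1 H3); subst.
  apply occ_atom_inv in H4; tauto.
Qed.

Lemma atom_nonoverlap G p q a b c d t u :
  occ_in G true p (Eps a b) t -> occ_in G true q (Eps c d) u ->
  (Eps a b <> Eps c d \/ t <> u) -> nonoverlap p q.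
Proof.
  intros Hp Hq Hdiff; split; intros [r ->].
  - destruct (occ_below_atom _ _ _ _ _ _ _ _ Hp Hq) as [E1 E2].
    destruct Hdiff as [Hd | Hd]; apply Hd; congruence.
  - destruct (occ_below_atom _ _ _ _ _ _ _ _ Hq Hp) as [E1 E2].
    destruct Hdiff as [Hd | Hd]; apply Hd; congruence.
Qed.

Lemma atom_both_parts G a b :
  pos_part G (Eps a b) -> neg_part G (Eps a b) -> closed_form G.
Proof.
  intros [p Hp] [q Hq]. exists (Eps a b), p, q; split; [|split]; auto.
  apply (atom_nonoverlap G p q a b a b true false); auto; right; discriminate.
Qed.

Lemma pos_part_or G B C : pos_part G (Or B C) -> pos_part G B /\ pos_part G C.
Proof.
  intros [p Hp]; split; [exists (p ++ [0]) | exists (p ++ [1])];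
    eapply occ_app; eauto; repeat constructor.
Qed.

Lemma pos_part_not G B : pos_part G (Not B) -> neg_part G B.
Proof. intros [p Hp]; exists (p ++ [0]); eapply occ_app; eauto; repeat constructor. Qed.

Lemma neg_part_not G B : neg_part G (Not B) -> pos_part G B.
Proof. intros [p Hp]; exists (p ++ [0]); eapply occ_app; eauto; repeat constructor. Qed.

Fixpoint subs (A : form) : list form :=
  A :: match A with Or B C => subs B ++ subs C | Not B => subs B | Eps _ _ => [] end.

Lemma subs_refl A : In A (subs A).
Proof. destruct A; simpl; auto. Qed.

Lemma subs_trans X Y Z : In Y (subs X) -> In Z (subs Y) -> In Z (subs X).
Proof.
  revert Y Z; induction X; simpl; intros Y Z H1 H2.
  - destruct H1 as [<- | []]; auto.
  - destruct H1 as [<- | H1]; auto.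
    right; apply in_app_or in H1; apply in_or_app; destruct H1; eauto.
  - destruct H1 as [<- | H1]; eauto.
Qed.

Lemma occ_sub A s p X t : occ_in A s p X t -> In X (subs A).
Proof.
  induction 1; simpl; auto using subs_refl; right; apply in_or_app; auto.
Qed.

(** * Semantics and soundness *)

Definition refutes (D : Type) (F : name -> D -> Prop) (s : bool) (A : form) : Prop :=
  if s then ~ Tsat D F A else Tsat D F A.

Lemma occ_refutes A s p X t D F :
  occ_in A s p X t -> refutes D F s A -> refutes D F t X.
Proof.
  induction 1; unfold refutes in *; simpl in *; auto.
  - intro; apply IHocc_in; tauto.
  - intro; apply IHocc_in; tauto.
  - intro; apply IHocc_in; destruct s; simpl in *; auto; apply NNPP; auto.
Qed.

Lemma neg_part_sat D F G X : neg_part G X -> ~ Tsat D F G -> Tsat D F X.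
Proof. intros [p Hp]; exact (occ_refutes _ _ _ _ _ D F Hp). Qed.

Lemma pos_part_unsat D F G X : pos_part G X -> ~ Tsat D F G -> ~ Tsat D F X.
Proof. intros [p Hp]; exact (occ_refutes _ _ _ _ _ D F Hp). Qed.

Lemma closed_valid G : closed_form G -> T_valid G.
Proof.
  intros (B & p & q & Hp & Hq & _) D d F. apply NNPP; intro Hn.
  apply (pos_part_unsat D F G B); [exists p | | apply (neg_part_sat D F G B); [exists q|]]; auto.
Qed.

Lemma eps_sat_refl D F a b : Tsat D F (Eps a b) -> Tsat D F (Eps a a).
Proof. intros [[x [Ha Hb]] Hu]; split; eauto. Qed.

Lemma eps_sat_trans D F a b c :
  Tsat D F (Eps a b) -> Tsat D F (Eps b c) -> Tsat D F (Eps a c).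
Proof.
  intros [[x [Ha Hb]] Hu] [[y [Hb' Hc]] Hu'].
  assert (x = y) as <- by (apply Hu'; auto). split; eauto.
Qed.

Lemma eps_sat_sym D F a b :
  Tsat D F (Eps a b) -> Tsat D F (Eps b b) -> Tsat D F (Eps b a).
Proof. intros [[x [Ha Hb]] _] [_ Hu]; split; eauto. Qed.

Lemma valid_by_extension G X :
  T_valid (Or G (Not X)) -> (forall D F, ~ Tsat D F G -> Tsat D F X) -> T_valid G.
Proof.
  intros HV HX D d F. apply NNPP; intro Hn.
  destruct (HV D d F) as [HG | HnX]; auto. apply HnX, HX, Hn.
Qed.

Lemma tableau_sound G : has_closed_tableau G -> T_valid G.
Proof.
  induction 1 as [G HG | G p B C Hp _ IHB _ IHC | G p a b Hp _ IH
                 | G p q a b c Hp Hq _ _ IH | G p q a b Hp Hq _ _ IH].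
  - apply closed_valid; auto.
  - intros D d F; apply NNPP; intro Hn.
    destruct (neg_part_sat D F G (Or B C)) as [HB | HC]; [exists p; auto | auto | |].
    + destruct (IHB D d F) as [? | HnB]; auto.
    + destruct (IHC D d F) as [? | HnC]; auto.
  - apply (valid_by_extension _ _ IH); intros D F Hn.
    apply (eps_sat_refl D F a b), (neg_part_sat D F G); [exists p|]; auto.
  - apply (valid_by_extension _ _ IH); intros D F Hn.
    apply (eps_sat_trans D F a b c); apply (neg_part_sat D F G); eauto; eexists; eauto.
  - apply (valid_by_extension _ _ IH); intros D F Hn.
    apply (eps_sat_sym D F a b); apply (neg_part_sat D F G); eauto; eexists; eauto.
Qed.

Definition bdec (P : Prop) : bool := if excluded_middle_informative P then true else false.

Lemma bdec_true P : bdec P = true <-> P.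
Proof. unfold bdec; destruct (excluded_middle_informative P); split; auto; discriminate. Qed.

Lemma pinst_sat D F s P :
  Tsat D F (pinst s P) <-> peval (fun n => bdec (Tsat D F (s n))) P = true.
Proof.
  induction P; simpl.
  - rewrite bdec_true; tauto.
  - rewrite orb_true_iff; tauto.
  - rewrite negb_true_iff, <- not_true_iff_false; tauto.
Qed.

Lemma sat_imp D F A B : (Tsat D F A -> Tsat D F B) -> Tsat D F (Imp A B).
Proof. simpl; intros; destruct (classic (Tsat D F A)); tauto. Qed.

Lemma sat_and D F A B : Tsat D F (And A B) <-> Tsat D F A /\ Tsat D F B.
Proof. simpl; split; [intro H; split; apply NNPP | ]; tauto. Qed.

Lemma hilbert_sound A : H_provable A -> T_valid A.
Proof.
  induction 1 as [A (P & s & HP & ->) | a b | a b c | a b | A B _ IHAB _ IHA];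
    intros D d F.
  - apply pinst_sat, HP.
  - apply sat_imp, eps_sat_refl.
  - apply sat_imp; rewrite sat_and; intros [? ?]; eapply eps_sat_trans; eauto.
  - apply sat_imp; rewrite sat_and; intros [? ?]; eapply eps_sat_sym; eauto.
  - destruct (IHAB D d F) as [HnA | HB]; [contradiction (HnA (IHA D d F)) | exact HB].
Qed.

(** * Realising a relation as the interpretation of epsilon *)

Section RelationModel.
Variable N : name -> name -> Prop.
Hypothesis N_refl : forall a b, N a b -> N a a.
Hypothesis N_trans : forall a b c, N a b -> N b c -> N a c.
Hypothesis N_sym : forall a b, N a b -> N b b -> N b a.

(* Individuals are the N-classes [N x] of the singular names x (those with N x x),
   together with two extra points (a, true), (a, false) for each name a: these
   belong to F_a exactly when a is not singular, so that F_a is then not a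
   singleton. *)
Definition rel_domain : Type := ((name -> Prop) + (name * bool))%type.

Definition rel_pred (a : name) (d : rel_domain) : Prop :=
  match d with
  | inl c => exists x, N x x /\ c = N x /\ N x a
  | inr (a', _) => a' = a /\ ~ N a a
  end.

Lemma rel_pred_singular a d : N a a -> rel_pred a d -> d = inl (N a).
Proof.
  intros Haa. destruct d as [c | [a' i]]; simpl.
  - intros (x & Hxx & -> & Hxa). assert (Hax : N a x) by auto.
    f_equal; apply functional_extensionality; intro z;
      apply propositional_extensionality; split; eauto.
  - tauto.
Qed.

Lemma rel_model_eps a b : Tsat rel_domain rel_pred (Eps a b) <-> N a b.
Proof.
  simpl; split.
  - intros [[d [Ha Hb]] Hu]. destruct (classic (N a a)) as [Haa | Haa].
    + rewrite (rel_pred_singular a d Haa Ha) in Hb.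
      destruct Hb as (y & _ & Ey & Hyb). rewrite Ey; exact Hyb.
    + assert (Hpt : forall i, rel_pred a (inr (a, i))) by (intro; split; auto).
      discriminate (Hu (inr (a, true)) (inr (a, false)) (conj (Hpt true) (Hpt false))).
  - intros Hab. split.
    + exists (inl (N a)); split; exists a; eauto.
    + intros x y [Hx Hy].
      rewrite (rel_pred_singular a x), (rel_pred_singular a y); eauto.
Qed.

End RelationModel.

Lemma relation_model (N : name -> name -> Prop) :
  (forall a b, N a b -> N a a) ->
  (forall a b c, N a b -> N b c -> N a c) ->
  (forall a b, N a b -> N b b -> N b a) ->
  exists (D : Type) (d : D) (F : name -> D -> Prop),
    forall a b, Tsat D F (Eps a b) <-> N a b.
Proof.
  intros N1 N2 N3. exists rel_domain, (inr (0, true)), (rel_pred N).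
  apply rel_model_eps; auto.
Qed.

(* A Hintikka formula is falsified by the structure realising its negative atoms:
   by induction, its positive parts are false and its negative parts true. *)
Lemma hintikka_countermodel H : hintikka H ->
  exists (D : Type) (d : D) (F : name -> D -> Prop),
    ~ Tsat D F H /\ forall a b, Tsat D F (Eps a b) <-> neg_part H (Eps a b).
Proof.
  intros (Hc & Hor & H1 & H2 & H3).
  destruct (relation_model (fun a b => neg_part H (Eps a b)) H1 H2 H3)
    as (D & d & F & HF).
  exists D, d, F; split; auto.
  assert (Hparts : forall X, (pos_part H X -> ~ Tsat D F X) /\ (neg_part H X -> Tsat D F X)).
  { induction X as [a b | B [IHBp IHBn] C [IHCp IHCn] | B [IHBp IHBn]]; simpl; split.
    - intros Hp Ht; apply HF in Ht; apply Hc, (atom_both_parts H a b); auto.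
    - apply HF.
    - intros Hp; apply pos_part_or in Hp as [HB HC].
      intros [HtB | HtC]; [apply (IHBp HB) | apply (IHCp HC)]; auto.
    - intros Hn; destruct (Hor B C Hn); auto.
    - intros Hp; apply pos_part_not in Hp; auto.
    - intros Hn; apply neg_part_not in Hn; auto. }
  apply Hparts; exists []; constructor.
Qed.

Lemma nsubst_sat D F s B : Tsat D F (nsubst s B) <-> Tsat D (fun n => F (s n)) B.
Proof. induction B; simpl; tauto. Qed.

Lemma rejection_sound a0 A : H_rejected a0 A -> ~ T_valid A.
Proof.
  induction 1 as [ | | A B HAB _ IH | A B s _ IH E | A a b Hh _ _ _ Hab]; intro HV.
  - destruct (HV unit tt (fun _ _ => False)) as [[x [[] _]] _].
  - apply (HV unit tt (fun _ _ => True)); split; [exists tt; auto | intros [] [] _; auto].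
  - apply IH; intros D d F.
    destruct (hilbert_sound _ HAB D d F) as [HnA | HB]; [contradiction (HnA (HV D d F)) | exact HB].
  - apply IH; subst; intros D d F; apply nsubst_sat, HV; exact d.
  - destruct (hintikka_countermodel A Hh) as (D & d & F & Hn & HF).
    destruct (HV D d F) as [HA | Hab']; [tauto | apply Hab, HF, Hab'].
Qed.

(** * Propositional valuations of atoms *)

Fixpoint beval (w : name -> name -> bool) (A : form) : bool :=
  match A with
  | Eps a b => w a b
  | Or A B => beval w A || beval w B
  | Not A => negb (beval w A)
  end.

(* Coding atoms as propositional variables (via the Cantor pairing) makes every
   formula an instance of a propositional formula; so a formula true under every
   assignment to its atoms is an instance of a tautology. *)
Fixpoint enc (A : form) : pform :=
  match A with
  | Eps a b => PVar (to_nat (a, b))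
  | Or A B => POr (enc A) (enc B)
  | Not A => PNot (enc A)
  end.

Lemma taut_of A : (forall w, beval w A = true) -> taut_instance A.
Proof.
  intros HA. exists (enc A), (fun n => Eps (fst (of_nat n)) (snd (of_nat n))). split.
  - intro v. rewrite <- (HA (fun a b => v (to_nat (a, b)))).
    clear HA; induction A; cbn [peval enc beval]; congruence.
  - clear HA; induction A as [a b | | ]; cbn [pinst enc]; try congruence.
    rewrite cancel_of_to; reflexivity.
Qed.

Fixpoint names (A : form) : list name :=
  match A with
  | Eps a b => [a; b]
  | Or A B => names A ++ names B
  | Not A => names A
  end.

Lemma names_ne A : names A <> [].
Proof. induction A; simpl; try discriminate; auto. destruct (names A1); simpl; congruence. Qed.

Lemma beval_agree D F w A :
  (forall a b, In a (names A) -> In b (names A) -> (w a b = true <-> Tsat D F (Eps a b))) ->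
  (beval w A = true <-> Tsat D F A).
Proof.
  induction A; simpl; intros Hw.
  - apply Hw; simpl; auto.
  - rewrite orb_true_iff, IHA1, IHA2; [tauto | |]; intros; apply Hw; apply in_or_app; auto.
  - rewrite negb_true_iff, <- not_true_iff_false, IHA; [tauto | auto].
Qed.

(** * Completeness of the Hilbert system *)

Fixpoint imps (Hs : list form) (A : form) : form :=
  match Hs with [] => A | X :: Hs => Imp X (imps Hs A) end.

Lemma imps_mp Hs A :
  H_provable (imps Hs A) -> (forall X, In X Hs -> H_provable X) -> H_provable A.
Proof.
  revert A; induction Hs; simpl; intros A H HHs; auto.
  apply IHHs; auto. eapply H_mp; eauto.
Qed.

Lemma beval_imps Hs A w :
  ((forall X, In X Hs -> beval w X = true) -> beval w A = true) -> beval w (imps Hs A) = true.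
Proof.
  induction Hs as [|X Hs IHHs]; simpl; intros H; auto.
  destruct (beval w X) eqn:E; simpl; auto.
  apply IHHs; intros HHs; apply H; intros Y [<- | HY]; auto.
Qed.

Definition ax_instances (S : list name) : list form :=
  flat_map (fun a => flat_map (fun b => flat_map (fun c =>
    [Imp (Eps a b) (Eps a a);
     Imp (And (Eps a b) (Eps b c)) (Eps a c);
     Imp (And (Eps a b) (Eps b b)) (Eps b a)]) S) S) S.

Lemma ax_instances_provable S X : In X (ax_instances S) -> H_provable X.
Proof.
  unfold ax_instances; intros H.
  apply in_flat_map in H as (a & _ & H); apply in_flat_map in H as (b & _ & H);
    apply in_flat_map in H as (c & _ & H).
  destruct H as [<- | [<- | [<- | []]]]; [apply H_ax1 | apply H_ax2 | apply H_ax3].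
Qed.

Lemma ax_instances_in S a b c : In a S -> In b S -> In c S ->
  In (Imp (Eps a b) (Eps a a)) (ax_instances S) /\
  In (Imp (And (Eps a b) (Eps b c)) (Eps a c)) (ax_instances S) /\
  In (Imp (And (Eps a b) (Eps b b)) (Eps b a)) (ax_instances S).
Proof.
  intros Ha Hb Hc; unfold ax_instances.
  repeat split; apply in_flat_map; exists a; split; auto; apply in_flat_map;
    exists b; split; auto; apply in_flat_map; exists c; simpl; auto.
Qed.

Lemma valuation_model S w :
  (forall X, In X (ax_instances S) -> beval w X = true) ->
  exists (D : Type) (d : D) (F : name -> D -> Prop),
    forall a b, In a S -> In b S -> (w a b = true <-> Tsat D F (Eps a b)).
Proof.
  intros Hax. set (N := fun a b => In a S /\ In b S /\ w a b = true).
  assert (Hinst : forall a b c, In a S -> In b S -> In c S ->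
    (w a b = true -> w a a = true) /\ (w a b = true -> w b c = true -> w a c = true) /\
    (w a b = true -> w b b = true -> w b a = true)).
  { intros a b c Ha Hb Hc. destruct (ax_instances_in S a b c Ha Hb Hc) as (I1 & I2 & I3).
    apply Hax in I1, I2, I3; simpl in *.
    destruct (w a b), (w a a), (w b c), (w a c), (w b b), (w b a); simpl in *;
      repeat split; congruence. }
  assert (N1 : forall a b, N a b -> N a a).
  { intros a b (Ha & Hb & Hw); repeat split; auto.
    destruct (Hinst a b a Ha Hb Ha) as (I1 & I2 & I3); auto. }
  assert (N2 : forall a b c, N a b -> N b c -> N a c).
  { intros a b c (Ha & Hb & Hw) (_ & Hc & Hw'); repeat split; auto.
    destruct (Hinst a b c Ha Hb Hc) as (I1 & I2 & I3); auto. }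
  assert (N3 : forall a b, N a b -> N b b -> N b a).
  { intros a b (Ha & Hb & Hw) (_ & _ & Hw'); repeat split; auto.
    destruct (Hinst a b a Ha Hb Ha) as (I1 & I2 & I3); auto. }
  destruct (relation_model N N1 N2 N3) as (D & d & F & HF).
  exists D, d, F; intros a b Ha Hb; rewrite HF; unfold N; tauto.
Qed.

(* A valid formula follows propositionally from the axiom instances over its
   names, hence is provable. *)
Lemma hilbert_complete A : T_valid A -> H_provable A.
Proof.
  intros HV. apply (imps_mp (ax_instances (names A)) A); [| apply ax_instances_provable].
  apply H_taut, taut_of; intro w; apply beval_imps; intros Hax.
  destruct (valuation_model (names A) w Hax) as (D & d & F & HF).
  apply (beval_agree D F w A HF), HV; exact d.
Qed.

(** * Completeness of tableaux *)

Definition EpsP (pr : name * name) : form := Eps (fst pr) (snd pr).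

Lemma subs_names A a b : In (Eps a b) (subs A) -> In a (names A) /\ In b (names A).
Proof.
  induction A; simpl; intros H.
  - destruct H as [H | []]; inversion H; subst; simpl; auto.
  - destruct H as [H | H]; [discriminate |]. apply in_app_or in H as [H | H].
    + destruct (IHA1 H); split; apply in_or_app; auto.
    + destruct (IHA2 H); split; apply in_or_app; auto.
  - destruct H as [H | H]; [discriminate | auto].
Qed.

(* The finite universe of formulas a systematic tableau for A can introduce: the
   subformulas of A and all atoms over the names of A. *)
Definition universe (A : form) : list form :=
  subs A ++ map EpsP (list_prod (names A) (names A)).

Lemma universe_subs A X Y : In X (universe A) -> In Y (subs X) -> In Y (universe A).
Proof.
  unfold universe; intros HX HY. apply in_app_or in HX as [HX | HX]; apply in_or_app.
  - left; eapply subs_trans; eauto.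
  - right. apply in_map_iff in HX as ([a b] & <- & Hp).
    destruct HY as [<- | []]. apply in_map_iff; exists (a, b); auto.
Qed.

Lemma universe_atom A a b :
  In (Eps a b) (universe A) <-> In a (names A) /\ In b (names A).
Proof.
  unfold universe; rewrite in_app_iff, in_map_iff; split.
  - intros [H | ([x y] & E & Hp)]; [apply subs_names; auto |].
    injection E as -> ->; apply in_prod_iff; auto.
  - intros [Ha Hb]; right; exists (a, b); split; [reflexivity | apply in_prod; auto].
Qed.

(* Every negative part of G lies in U: the invariant of a systematic tableau. *)
Definition parts_within (U : list form) (G : form) : Prop :=
  forall X, neg_part G X -> In X U.

Lemma parts_within_child A G X :
  parts_within (universe A) G -> In X (universe A) -> parts_within (universe A) (Or G (Not X)).
Proof.
  intros HG HX Y [p Hp]. inversion Hp as [| ? ? q ? ? Hq | ? ? q ? ? Hq |]; subst.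
  - apply HG; exists q; auto.
  - inversion Hq; subst. eapply universe_subs; eauto; eapply occ_sub; eauto.
Qed.

(* The measure: how many formulas of U are not yet negative parts of G. *)
Definition unexpanded (U : list form) (G : form) : nat :=
  length (filter (fun X => negb (bdec (neg_part G X))) U).

Lemma filter_length_lt {T} (f g : T -> bool) l x :
  (forall y, g y = true -> f y = true) -> In x l -> f x = true -> g x = false ->
  length (filter g l) < length (filter f l).
Proof.
  intros Hgf. induction l as [|y l IHl]; simpl; intros Hx Hf Hg; [contradiction |].
  assert (Hle : forall l', length (filter g l') <= length (filter f l')).
  { induction l' as [|z l' IH]; simpl; auto.
    specialize (Hgf z); destruct (g z), (f z); simpl; try lia; discriminate (Hgf eq_refl). }
  destruct Hx as [<- | Hx].
  - rewrite Hf, Hg; simpl; specialize (Hle l); lia.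
  - specialize (IHl Hx Hf Hg); specialize (Hgf y).
    destruct (g y), (f y); simpl; try lia; discriminate (Hgf eq_refl).
Qed.

Lemma unexpanded_child U G X :
  In X U -> ~ neg_part G X -> unexpanded U (Or G (Not X)) < unexpanded U G.
Proof.
  intros HX HnX. unfold unexpanded. apply filter_length_lt with X; auto.
  - intros Y. rewrite !negb_true_iff, <- !not_true_iff_false, !bdec_true.
    intros HY [p Hp]; apply HY; exists (0 :: p); constructor; auto.
  - rewrite negb_true_iff, <- not_true_iff_false, bdec_true; auto.
  - rewrite negb_false_iff, bdec_true; exists [1; 0]; repeat constructor.
Qed.

Lemma not_hintikka G : ~ closed_form G -> ~ hintikka G ->
  (exists B C, neg_part G (Or B C) /\ ~ neg_part G B /\ ~ neg_part G C) \/
  (exists a b, neg_part G (Eps a b) /\ ~ neg_part G (Eps a a)) \/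
  (exists a b c, neg_part G (Eps a b) /\ neg_part G (Eps b c) /\ ~ neg_part G (Eps a c)) \/
  (exists a b, neg_part G (Eps a b) /\ neg_part G (Eps b b) /\ ~ neg_part G (Eps b a)).
Proof.
  intros Hc Hh. apply NNPP; intro Hn. apply Hh; split; [exact Hc | split; [| split; [| split]]].
  - intros B C H; apply NNPP; intro; apply Hn; left; exists B, C; tauto.
  - intros a b H; apply NNPP; intro; apply Hn; right; left; exists a, b; tauto.
  - intros a b c H H'; apply NNPP; intro; apply Hn; right; right; left; exists a, b, c; tauto.
  - intros a b H H'; apply NNPP; intro; apply Hn; right; right; right; exists a, b; tauto.
Qed.

Lemma tableau_step A G :
  parts_within (universe A) G -> ~ closed_form G -> ~ hintikka G ->
  exists Xs, (forall X, In X Xs -> In X (universe A) /\ ~ neg_part G X) /\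
    ((forall X, In X Xs -> has_closed_tableau (Or G (Not X))) -> has_closed_tableau G).
Proof.
  intros HU Hc Hh.
  assert (Hatom : forall a b, neg_part G (Eps a b) -> In a (names A) /\ In b (names A))
    by (intros a b H; apply universe_atom, HU, H).
  destruct (not_hintikka G Hc Hh) as
    [(B & C & [p Hp] & HB & HC) | [(a & b & [p Hp] & Haa) |
    [(a & b & c & [p Hp] & [q Hq] & Hac) | (a & b & [p Hp] & [q Hq] & Hba)]]].
  - assert (HBC : In (Or B C) (universe A)) by (apply HU; exists p; auto).
    exists [B; C]; split.
    + intros X [<- | [<- | []]]; split; auto; apply (universe_subs A _ _ HBC); simpl;
        right; apply in_or_app; auto using subs_refl.
    + intros Hch; apply (tab_or G p B C); auto; apply Hch; simpl; auto.
  - destruct (Hatom a b) as [Ha _]; [exists p; auto |].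
    exists [Eps a a]; split.
    + intros X [<- | []]; split; auto; apply universe_atom; auto.
    + intros Hch; apply (tab_eps1 G p a b); auto; apply Hch; simpl; auto.
  - destruct (Hatom a b) as [Ha _]; [exists p; auto |].
    destruct (Hatom b c) as [_ Hc']; [exists q; auto |].
    assert (Hdiff : Eps a b <> Eps b c)
      by (intro E; injection E as -> ->; apply Hac; exists p; auto).
    exists [Eps a c]; split.
    + intros X [<- | []]; split; auto; apply universe_atom; auto.
    + intros Hch; apply (tab_eps2 G p q a b c); auto; [| apply Hch; simpl; auto].
      apply (atom_nonoverlap G p q a b b c false false); auto.
  - destruct (Hatom a b) as [Ha Hb]; [exists p; auto |].
    assert (Hdiff : Eps a b <> Eps b b)
      by (intro E; injection E as ->; apply Hba; exists p; auto).
    exists [Eps b a]; split.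
    + intros X [<- | []]; split; auto; apply universe_atom; auto.
    + intros Hch; apply (tab_eps3b G p q a b); auto; [| apply Hch; simpl; auto].
      apply (atom_nonoverlap G p q a b b b false false); auto.
Qed.

(* The systematic tableau: by induction on the measure, a valid formula whose
   negative parts stay in the universe has a closed tableau, because a Hintikka
   formula is never valid. *)
Lemma tableau_complete_within A G :
  parts_within (universe A) G -> T_valid G -> has_closed_tableau G.
Proof.
  remember (unexpanded (universe A) G) as k eqn:Hk. revert G Hk.
  induction k as [k IH] using (well_founded_induction lt_wf); intros G Hk HU HV.
  destruct (classic (closed_form G)) as [Hc | Hc]; [apply tab_leaf; auto |].
  destruct (classic (hintikka G)) as [Hh | Hh].
  - destruct (hintikka_countermodel G Hh) as (D & d & F & Hn & _).
    contradiction (Hn (HV D d F)).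
  - destruct (tableau_step A G HU Hc Hh) as (Xs & HXs & Hstep).
    apply Hstep; intros X HX; destruct (HXs X HX) as [HXU HXn].
    apply (IH (unexpanded (universe A) (Or G (Not X)))).
    + subst; apply unexpanded_child; auto.
    + reflexivity.
    + apply parts_within_child; auto.
    + intros D d F; left; exact (HV D d F).
Qed.

Lemma tableau_complete A : T_valid A -> has_closed_tableau A.
Proof.
  apply (tableau_complete_within A).
  intros X [p Hp]; apply in_or_app; left; eapply occ_sub; eauto.
Qed.

(** * Completeness of the axiomatic rejection *)

Fixpoint leaves (A : form) : list form :=
  match A with Or A B => leaves A ++ leaves B | X => [X] end.

Lemma beval_leaves w A : beval w A = existsb (beval w) (leaves A).
Proof.
  induction A; simpl; try (rewrite orb_false_r; reflexivity).
  rewrite existsb_app, IHA1, IHA2; reflexivity.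
Qed.

Lemma leaves_nsubst s A : leaves (nsubst s A) = map (nsubst s) (leaves A).
Proof. induction A; simpl; auto. rewrite map_app, IHA1, IHA2; auto. Qed.

Definition disj (C : form) (Xs : list form) : form := fold_left Or Xs C.

Lemma leaves_disj C Xs :
  (forall X, In X Xs -> leaves X = [X]) -> leaves (disj C Xs) = leaves C ++ Xs.
Proof.
  unfold disj; revert C; induction Xs as [|X Xs IH]; simpl; intros C HXs.
  - rewrite app_nil_r; auto.
  - rewrite IH by auto; simpl; rewrite (HXs X) by auto; rewrite <- app_assoc; auto.
Qed.

Lemma literal_disj_disj C Xs :
  literal_disj C -> (forall X, In X Xs -> literal_disj X) -> literal_disj (disj C Xs).
Proof.
  unfold disj; revert C; induction Xs; simpl; intros C HC HXs; auto.
  apply IHXs; auto; constructor; auto.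
Qed.

Lemma literal_neg_part C X : literal_disj C ->
  neg_part C X <-> exists a b, X = Eps a b /\ In (Not (Eps a b)) (leaves C).
Proof.
  intros HC; split.
  - intros [p Hp]; revert p Hp; induction HC as [a b | a b | A B HA IHA HB IHB];
      intros p Ho; inversion Ho; subst.
    + match goal with Hx : occ_in (Eps _ _) _ _ _ _ |- _ =>
        apply occ_atom_inv in Hx as (_ & -> & _) end.
      exists a, b; simpl; auto.
    + match goal with Hx : occ_in A _ _ _ _ |- _ =>
        destruct (IHA _ Hx) as (a & b & -> & Hi) end.
      exists a, b; simpl; rewrite in_app_iff; auto.
    + match goal with Hx : occ_in B _ _ _ _ |- _ =>
        destruct (IHB _ Hx) as (a & b & -> & Hi) end.
      exists a, b; simpl; rewrite in_app_iff; auto.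
  - intros (a & b & -> & Hi); induction HC as [x y | x y | A B HA IHA HB IHB]; simpl in Hi.
    + destruct Hi as [E | []]; discriminate.
    + destruct Hi as [E | []]; injection E as -> ->; exists [0]; repeat constructor.
    + apply in_app_or in Hi as [Hi | Hi].
      * destruct (IHA Hi) as [p Hp]; exists (0 :: p); constructor; auto.
      * destruct (IHB Hi) as [p Hp]; exists (1 :: p); constructor; auto.
Qed.

Lemma literal_pos_atom C a b : literal_disj C -> pos_part C (Eps a b) -> In (Eps a b) (leaves C).
Proof.
  intros HC [p Hp]; revert p Hp; induction HC as [x y | x y | A B HA IHA HB IHB];
    intros p Ho; inversion Ho; subst; simpl; auto.
  - match goal with Hx : occ_in (Eps _ _) _ _ _ _ |- _ =>
      apply occ_atom_inv in Hx as (_ & _ & E) end; discriminate.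
  - apply in_or_app; left; eauto.
  - apply in_or_app; right; eauto.
Qed.

(* Identifying every name with a0 turns a formula all of whose disjuncts collapse
   to the rejected formula Y into a formula implying Y; so it is rejected. *)
Lemma rejected_collapse a0 C Y : H_rejected a0 Y ->
  (forall X, In X (leaves C) -> nsubst (fun _ => a0) X = Y) -> H_rejected a0 C.
Proof.
  intros HY HC. apply (R_subst a0 (nsubst (fun _ => a0) C) C (fun _ => a0)); [| reflexivity].
  apply (R_mp a0 _ Y); auto.
  apply H_taut, taut_of; intro w; simpl.
  destruct (beval w (nsubst _ C)) eqn:E; [simpl | reflexivity].
  rewrite beval_leaves, leaves_nsubst in E. apply existsb_exists in E as (X' & HX' & HX).
  apply in_map_iff in HX' as (X & <- & HX'). rewrite HC in HX; auto.
Qed.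

Definition NotP (pr : name * name) : form := Not (EpsP pr).

Definition pairs_with (S : list name) (P : name -> name -> Prop) : list (name * name) :=
  filter (fun pr => bdec (P (fst pr) (snd pr))) (list_prod S S).

Lemma in_pairs_with S P a b : In (a, b) (pairs_with S P) <-> In a S /\ In b S /\ P a b.
Proof. unfold pairs_with; rewrite filter_In, in_prod_iff, bdec_true; simpl; tauto. Qed.

Section RecordingDisjunctions.
Variables (a0 : name) (S : list name) (N : name -> name -> Prop).
Hypothesis N_refl : forall a b, N a b -> N a a.
Hypothesis N_trans : forall a b c, N a b -> N b c -> N a c.
Hypothesis N_sym : forall a b, N a b -> N b b -> N b a.

Definition records (C : form) : Prop :=
  literal_disj C /\
  (forall a b, In (Not (Eps a b)) (leaves C) <-> In a S /\ In b S /\ N a b) /\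
  (forall a b, In (Eps a b) (leaves C) -> ~ N a b).

Lemma records_neg_part C a b : records C -> neg_part C (Eps a b) <-> In a S /\ In b S /\ N a b.
Proof.
  intros (HC & Hneg & _). rewrite literal_neg_part, <- Hneg by auto. split.
  - intros (x & y & E & H); injection E as -> ->; auto.
  - intros H; exists a, b; auto.
Qed.

(* The closure conditions of a Hintikka formula are those of N. *)
Lemma records_hintikka C : records C -> hintikka C.
Proof.
  intros HR. pose proof HR as (HC & _ & Hpos).
  pose proof (fun a b => records_neg_part C a b HR) as Hn.
  split; [| split; [| split; [| split]]].
  - intros (B & p & q & Hp & Hq & _).
    destruct (proj1 (literal_neg_part C B HC) (ex_intro _ q Hq)) as (a & b & -> & _).
    apply (Hpos a b); [apply literal_pos_atom; auto; exists p; auto |].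
    apply Hn; exists q; auto.
  - intros B B' H; apply literal_neg_part in H as (a & b & E & _); [discriminate | auto].
  - intros a b H; apply Hn in H as (Ha & Hb & Hab); apply Hn; eauto.
  - intros a b c H H'; apply Hn in H as (Ha & Hb & Hab); apply Hn in H' as (_ & Hc & Hbc).
    apply Hn; eauto.
  - intros a b H H'; apply Hn in H as (Ha & Hb & Hab); apply Hn in H' as (_ & _ & Hbb).
    apply Hn; eauto.
Qed.

Lemma records_step C a b : records C -> H_rejected a0 C -> ~ N a b ->
  records (Or C (Eps a b)) /\ H_rejected a0 (Or C (Eps a b)).
Proof.
  intros HR HCr Hab. split.
  - destruct HR as (HC & Hneg & Hpos). split; [constructor; auto; constructor | split]; simpl.
    + intros x y; rewrite <- Hneg, in_app_iff; simpl.
      split; [intros [H | [E | []]]; [auto | discriminate] | auto].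
    + intros x y; rewrite in_app_iff; simpl.
      intros [H | [E | []]]; [auto | injection E as -> ->; auto].
  - apply R_hint; auto; [apply records_hintikka; auto | apply HR |].
    rewrite (records_neg_part C a b HR); tauto.
Qed.

Lemma records_extend C ps : records C -> H_rejected a0 C ->
  (forall pr, In pr ps -> ~ N (fst pr) (snd pr)) ->
  records (disj C (map EpsP ps)) /\ H_rejected a0 (disj C (map EpsP ps)).
Proof.
  unfold disj; revert C; induction ps as [|pr ps IH]; simpl; intros C HR HCr Hps; auto.
  destruct (records_step C (fst pr) (snd pr)) as [HR' HCr']; auto.
Qed.

(* Seed when N has pairs over S: the disjunction of all negated N-atoms, rejected
   because it collapses to ~ eps a0 a0. *)
Lemma records_neg_seed n0 ns : pairs_with S N = n0 :: ns ->
  records (disj (NotP n0) (map NotP ns)) /\ H_rejected a0 (disj (NotP n0) (map NotP ns)).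
Proof.
  intros EN.
  assert (Hleaves : leaves (disj (NotP n0) (map NotP ns)) = map NotP (pairs_with S N)).
  { rewrite EN, leaves_disj; [reflexivity |].
    intros X HX; apply in_map_iff in HX as (pr & <- & _); reflexivity. }
  split; [split; [| split] |].
  - apply literal_disj_disj; [constructor |].
    intros X HX; apply in_map_iff in HX as (pr & <- & _); constructor.
  - intros a b; rewrite Hleaves, <- in_pairs_with, in_map_iff; split.
    + intros ([x y] & E & H); injection E as -> ->; auto.
    + intros H; exists (a, b); auto.
  - intros a b; rewrite Hleaves, in_map_iff; intros (pr & E & _); discriminate.
  - apply (rejected_collapse a0 _ (Not (Eps a0 a0))); [constructor |].
    intros X; rewrite Hleaves, in_map_iff; intros (pr & <- & _); reflexivity.
Qed.

(* Seed when N has no pairs over S: a single atom outside N, rejected as an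
   instance of eps a0 a0. *)
Lemma records_pos_seed q0 : pairs_with S N = [] -> ~ N (fst q0) (snd q0) ->
  records (EpsP q0) /\ H_rejected a0 (EpsP q0).
Proof.
  intros EN Hq0. split; [split; [constructor | split] |]; simpl.
  - intros a b; rewrite <- in_pairs_with, EN; simpl.
    split; [intros [E | []]; discriminate | intros []].
  - intros a b [E | []]; injection E as <- <-; auto.
  - apply (R_subst a0 (Eps a0 a0) _ (fun _ => a0)); [constructor | reflexivity].
Qed.

Lemma records_exists : S <> [] ->
  exists L, records L /\ H_rejected a0 L /\
    forall a b, In a S -> In b S -> ~ N a b -> In (Eps a b) (leaves L).
Proof.
  intros HS.
  assert (HnonN : forall pr, In pr (pairs_with S (fun a b => ~ N a b)) -> ~ N (fst pr) (snd pr))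
    by (intros [a b]; rewrite in_pairs_with; tauto).
  assert (Hatoms : forall C ps, leaves (disj C (map EpsP ps)) = leaves C ++ map EpsP ps)
    by (intros; apply leaves_disj; intros X HX; apply in_map_iff in HX as (? & <- & _); auto).
  destruct (pairs_with S N) as [| n0 ns] eqn:EN.
  - destruct (pairs_with S (fun a b => ~ N a b)) as [| q0 qs] eqn:EP.
    + exfalso; destruct S as [| s0 S'] eqn:ES; [contradiction |].
      destruct (classic (N s0 s0)) as [Hs | Hs].
      * assert (H : In (s0, s0) (pairs_with (s0 :: S') N)) by (apply in_pairs_with; simpl; auto).
        rewrite EN in H; exact H.
      * assert (H : In (s0, s0) (pairs_with (s0 :: S') (fun a b => ~ N a b)))
          by (apply in_pairs_with; simpl; auto).
        rewrite EP in H; exact H.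
    + destruct (records_pos_seed q0) as [HR HCr]; [auto | apply HnonN; simpl; auto |].
      destruct (records_extend (EpsP q0) qs) as [HR' HCr']; auto.
      { intros; apply HnonN; simpl; auto. }
      exists (disj (EpsP q0) (map EpsP qs)); split; [exact HR' | split; [exact HCr' |]].
      intros a b Ha Hb Hab; rewrite Hatoms; simpl.
      assert (Hin : In (a, b) (q0 :: qs)) by (rewrite <- EP; apply in_pairs_with; auto).
      destruct Hin as [-> | Hin]; [left; reflexivity | right; exact (in_map EpsP _ _ Hin)].
  - destruct (records_neg_seed n0 ns EN) as [HR HCr].
    destruct (records_extend _ _ HR HCr HnonN) as [HR' HCr'].
    eexists; split; [exact HR' | split; [exact HCr' |]].
    intros a b Ha Hb Hab; rewrite Hatoms; apply in_or_app; right.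
    apply (in_map EpsP (pairs_with S (fun a b => ~ N a b)) (a, b)), in_pairs_with; auto.
Qed.

End RecordingDisjunctions.

(* If L records, over the names of A, the epsilon-relation of a countermodel of A,
   then A implies L propositionally: an assignment making L false agrees with the
   countermodel on those atoms, hence makes A false. *)
Lemma imp_records_taut A L D F : ~ Tsat D F A ->
  records (names A) (fun a b => Tsat D F (Eps a b)) L ->
  (forall a b, In a (names A) -> In b (names A) -> ~ Tsat D F (Eps a b) ->
     In (Eps a b) (leaves L)) ->
  H_provable (Imp A L).
Proof.
  intros HA (_ & Hneg & _) Hpos. apply H_taut, taut_of; intro w; simpl.
  destruct (beval w L) eqn:EL; [apply orb_true_r |]. rewrite orb_false_r, negb_true_iff.
  assert (Hleaf : forall X, In X (leaves L) -> beval w X = false).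
  { intros X HX; destruct (beval w X) eqn:E; auto.
    rewrite <- EL, beval_leaves; symmetry; apply existsb_exists; eauto. }
  apply not_true_iff_false; rewrite (beval_agree D F w A); auto.
  intros a b Ha Hb; split; intro H.
  - apply NNPP; intro Ht.
    pose proof (Hleaf _ (Hpos a b Ha Hb Ht)) as E; simpl in E; congruence.
  - pose proof (Hleaf _ (proj2 (Hneg a b) (conj Ha (conj Hb H)))) as E.
    simpl in E; apply negb_false_iff in E; exact E.
Qed.

Lemma rejection_complete a0 A : ~ T_valid A -> H_rejected a0 A.
Proof.
  intros HV.
  assert (Hcm : exists D (d : D) F, ~ Tsat D F A).
  { apply NNPP; intro Hn; apply HV; intros D d F; apply NNPP; intro HA; apply Hn; eauto. }
  destruct Hcm as (D & d & F & HA).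
  destruct (records_exists a0 (names A) (fun a b => Tsat D F (Eps a b))
              (eps_sat_refl D F) (eps_sat_trans D F) (eps_sat_sym D F) (names_ne A))
    as (L & HL & HLr & Hcov).
  apply (R_mp a0 A L); auto. apply (imp_records_taut A L D F); auto.
Qed.

Theorem theorem6p2 (a0 : name) (A : form) :
  (T_provable A <-> H_provable A) /\
  (H_provable A <-> T_valid A) /\
  (T_valid A <-> ~ H_rejected a0 A).
Proof.
  unfold T_provable; split; [| split].
  - split; intro H.
    + apply hilbert_complete, tableau_sound, H.
    + apply tableau_complete, hilbert_sound, H.
  - split; [apply hilbert_sound | apply hilbert_complete].
  - split.
    + intros HV HR; exact (rejection_sound a0 A HR HV).
    + intros HR; apply NNPP; intro HV; apply HR, rejection_complete, HV.
Qed.
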